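(* Let $t,t':V\to\mathbb{R}_{\ge0}$ be fingerprints with $t_v\le t'_v$ for all $v\in V$. Then at every time $\tau\ge0$: (i) every active component in shadow moat growing on $(G,t)$ is contained in some active component of shadow moat growing on $(G,t')$ at the same time $\tau$; and (ii) every component (active or not) of the run on $(G,t)$ at time $\tau$ is contained in some component of the run on $(G,t')$ at time $\tau$.
   Context: $G=(V,E,c)$ is an undirected graph with edge costs $c:E\to\mathbb{R}_{\ge0}$; $\delta(S)$ denotes the edges with exactly one endpoint in $S$. Shadow moat growing on $(G,t)$, for a fingerprint $t:V\to\mathbb{R}_{\ge0}$: a continuous process in time $\tau\ge0$ maintaining a forest $F$ (initially empty), the components of $(V,F)$, and values $y_S\ge0$ ($S\subseteq V$, initially $0$). At time $\tau$ a component $C$ is active iff it contains $w$ with $t_w>\tau$; each active component $C$ increases $y_C$ at rate $1$. When an edge $e$ between different components satisfies $\sum_{S:e\in\delta(S)}y_S=c_e$ it is added to $F$ and the components merge (ties processed one at a time by a fixed rule). The process stops when no component is active; the components and active components ''at time $\tau$'' are those after all merges and deactivations occurring at time $\tau$. *)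

(* Shadow moat growing, modelled as an exact event-driven
   simulation over an arbitrary real field R. *)
From mathcomp Require Import all_boot all_order all_algebra.
Set Implicit Arguments. Unset Strict Implicit. Unset Printing Implicit Defensive.
Import Order.TTheory GRing.Theory Num.Theory.
Local Open Scope ring_scope.

Section ShadowMoat.
(* Graph: vertex type V, edge type E (finite), endpoints of each edge
   (undirected: the pair is unordered in all uses), edge costs c,
   fingerprint t. *)
Variables (R : realFieldType) (V E : finType) (ends : E -> V * V)
          (c : E -> R) (t : V -> R).

Definition Frel (F : {set E}) : rel V :=
  fun u v => [exists e in F, (ends e == (u, v)) || (ends e == (v, u))].

Definition comp (F : {set E}) (v : V) : {set V} := [set u | connect (Frel F) v u].
Definition comps (F : {set E}) : {set {set V}} := [set comp F v | v : V].

Definition crossing (S : {set V}) (e : E) : bool :=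
  ((ends e).1 \in S) != ((ends e).2 \in S).

Definition load (y : {ffun {set V} -> R}) (e : E) : R :=
  \sum_(S : {set V} | crossing S e) y S.

Definition activeb (now : R) (S : {set V}) : bool := [exists w in S, now < t w].

Definition between (F : {set E}) (e : E) : bool :=
  ~~ connect (Frel F) (ends e).1 (ends e).2.

(* rate at which the left-hand side for e grows *)
Definition rate (F : {set E}) (now : R) (e : E) : R :=
  (nat_of_bool (activeb now (comp F (ends e).1)))%:R
  + (nat_of_bool (activeb now (comp F (ends e).2)))%:R.

Definition advance (F : {set E}) (now : R) (y : {ffun {set V} -> R}) (d : R)
  : {ffun {set V} -> R} :=
  [ffun S => y S + (if (S \in comps F) && activeb now S then d else 0)].

(* add tight edges between different components one at a time; the fixed
   tie-breaking rule is the enumeration order of E *)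
Definition merge (y : {ffun {set V} -> R}) (F : {set E}) : {set E} :=
  foldl (fun F e => if (load y e == c e) && between F e then e |: F else F)
        F (enum E).

(* candidate next event times: deactivations and edges becoming tight *)
Definition candidates (F : {set E}) (now : R) (y : {ffun {set V} -> R}) : seq R :=
  [seq t w | w <- enum V & now < t w] ++
  [seq now + (c e - load y e) / rate F now e
     | e <- enum E & between F e && (rate F now e != 0)].

Record state := St { stF : {set E}; stY : {ffun {set V} -> R};
                     stNow : R; stDone : bool }.

(* one event step of the simulation, stopping once the target time tau is
   reached (events happening exactly at tau are processed) *)
Definition step (tau : R) (s : state) : state :=
  let: St F y now d := s in
  if d then s else
  let nxt := foldr Order.min (tau + 1) (candidates F now y) in
  if tau < nxt then St F (advance F now y (tau - now)) tau true
  else let y' := advance F now y (nxt - now) in St (merge y' F) y' nxt false.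

Definition init_state : state :=
  let y0 := [ffun _ => 0] in St (merge y0 set0) y0 0 false.

(* each non-final step either merges two components or passes some t_w, so
   2|V|+1 steps always reach the target time *)
Definition run_at (tau : R) : state := iter (2 * #|V|).+1 (step tau) init_state.

(* components (after all merges/deactivations at time tau) *)
Definition components_at (tau : R) : {set {set V}} := comps (stF (run_at tau)).

Definition active_components_at (tau : R) : {set {set V}} :=
  [set C in components_at tau | activeb tau C].

End ShadowMoat.

From Pilot Require Import Defs.
From mathcomp Require Import all_boot all_order all_algebra zify ring.
Import Order.TTheory GRing.Theory Num.Theory.
Local Open Scope ring_scope.
Set Implicit Arguments. Unset Strict Implicit. Unset Printing Implicit Defensive.

(* Run both processes side by side, sweeping time through the union of their
   event times.  For a vertex v let A_v be the total dual value of the sets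
   containing v.  The invariant is: every forest edge of the t-run joins two
   vertices that are connected in the t'-run, and A_v <= A'_v for every v.
   Between events it survives because the t-component of v, if active, holds
   some w with t_w > now; the t'-component of v contains it and t'_w >= t_w,
   so A'_v grows at least as fast as A_v.  At an event of the t-run a new edge
   uw is tight, A_u + A_w = c_e; were u and w in different t'-components, the
   t'-run would have A'_u + A'_w < c_e, contradicting A <= A'.  Hence at time
   tau every t-component lies in a t'-component, and activity is inherited
   because t <= t'. *)

Section FoldrMin.
Variables (d : Order.disp_t) (T : orderType d).

Lemma foldr_min_mem (x0 : T) s : foldr Order.min x0 s \in x0 :: s.
Proof.
elim: s => [|x s IHs] /=; first by rewrite mem_seq1.
rewrite /Order.min; case: ifP => _; first by rewrite !inE eqxx orbT.
by move: IHs; rewrite !inE => /orP [->|->]; rewrite ?orbT.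
Qed.

Lemma foldr_min_le (x0 : T) s x : x \in x0 :: s -> (foldr Order.min x0 s <= x)%O.
Proof.
elim: s x => [|y s IHs] x /=; first by rewrite mem_seq1 => /eqP ->.
rewrite !inE ge_min => /or3P [/eqP ->|/eqP ->|hx].
- by rewrite IHs ?orbT // mem_head.
- by rewrite lexx.
- by rewrite IHs ?orbT // inE hx orbT.
Qed.

End FoldrMin.

Section ForestComponents.
Variables (V E : finType) (ends : E -> V * V).
Implicit Types (F : {set E}) (e : E) (u v x y : V).

Local Notation Fr := (Frel ends).
Local Notation comp := (Defs.comp ends).

Lemma Frel_sym F : symmetric (Fr F).
Proof. by move=> u v; apply: eq_existsb => e; rewrite orbC. Qed.

Lemma connect_FrelC F x y : connect (Fr F) x y = connect (Fr F) y x.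
Proof. exact/sym_connect_sym/Frel_sym. Qed.

Lemma connect_Frel_subset F F' x y :
  F \subset F' -> connect (Fr F) x y -> connect (Fr F') x y.
Proof.
move=> sFF'; apply: connect_sub => u v /existsP [e /andP [eF he]].
by apply/connect1/existsP; exists e; rewrite (subsetP sFF').
Qed.

(* The partition of V into components of F refines that of F'. *)
Definition refines F F' :=
  forall e, e \in F -> connect (Fr F') (ends e).1 (ends e).2.

Lemma refines_refl F : refines F F.
Proof.
move=> e eF; apply/connect1/existsP; exists e.
by rewrite eF -surjective_pairing eqxx.
Qed.

Lemma refines_subset F F' F'' : refines F F' -> F' \subset F'' -> refines F F''.
Proof. by move=> hF sF' e /hF; apply: connect_Frel_subset. Qed.

Lemma connect_refines F F' x y :
  refines F F' -> connect (Fr F) x y -> connect (Fr F') x y.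
Proof.
move=> hF; apply: connect_sub => u v /existsP [e /andP [/hF he /orP [] /eqP ee]];
  by move: he; rewrite ee //= connect_FrelC.
Qed.

Lemma in_comp F x y : (y \in comp F x) = connect (Fr F) x y.
Proof. by rewrite inE. Qed.

Lemma eq_comp F x y : connect (Fr F) x y -> comp F x = comp F y.
Proof.
move=> cxy; apply/setP => z; rewrite !in_comp; apply/idP/idP; last exact: connect_trans.
by apply: connect_trans; rewrite connect_FrelC.
Qed.

Lemma mem_comps F v : comp F v \in comps ends F.
Proof. exact: imset_f. Qed.

Lemma comps_memE F S v : S \in comps ends F -> v \in S -> S = comp F v.
Proof. by case/imsetP => x _ ->; rewrite in_comp => /eq_comp. Qed.

Lemma comp_refines F F' v : refines F F' -> comp F v \subset comp F' v.
Proof. by move=> hF; apply/subsetP => x; rewrite !in_comp; apply: connect_refines. Qed.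

Lemma between_subset F F' e : F \subset F' -> between ends F' e -> between ends F e.
Proof. by move=> sFF'; apply: contra; apply: connect_Frel_subset. Qed.

Lemma bigcup_comp F F' x :
  F \subset F' -> \bigcup_(v in comp F x) comp F' v = comp F' x.
Proof.
move=> sFF'; apply/setP => z; apply/bigcupP/idP => [|hz]; last first.
  by exists x; rewrite // in_comp connect0.
case=> v; rewrite !in_comp => hxv hvz.
by apply: connect_trans hvz; apply: connect_Frel_subset hxv.
Qed.

Lemma comps_subset F F' : F \subset F' ->
  comps ends F' = (fun C : {set V} => \bigcup_(v in C) comp F' v) @: comps ends F.
Proof.
move=> sFF'; apply/setP => C; apply/imsetP/imsetP.
  by case=> x _ ->; exists (comp F x); rewrite ?mem_comps ?bigcup_comp.
by case=> D /imsetP [x _ ->] ->; exists x; rewrite ?bigcup_comp.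
Qed.

Lemma leq_card_comps F F' : F \subset F' -> (#|comps ends F'| <= #|comps ends F|)%N.
Proof. by move=> sFF'; rewrite (comps_subset sFF') leq_imset_card. Qed.

Lemma ltn_card_comps F F' e : F \subset F' ->
  between ends F e -> ~~ between ends F' e -> (#|comps ends F'| < #|comps ends F|)%N.
Proof.
move=> sFF' hb hb'; rewrite (comps_subset sFF') ltn_neqAle leq_imset_card andbT.
apply/negP => /imset_injP /(_ _ _ (mem_comps F (ends e).1) (mem_comps F (ends e).2)).
rewrite !bigcup_comp // (eq_comp (negbNE hb')) => /(_ erefl) e12.
by move: hb; rewrite /between -in_comp e12 in_comp connect0.
Qed.

End ForestComponents.

Section Merge.
Variables (R : realFieldType) (V E : finType) (ends : E -> V * V) (c : E -> R).
Variable y : {ffun {set V} -> R}.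

Lemma foldl_merge_spec (s : seq E) (F : {set E}) :
  let F' := foldl (fun F e => if (load ends y e == c e) && between ends F e
                              then e |: F else F) F s in
  [/\ F \subset F',
      forall e, e \in F' -> e \notin F -> load ends y e = c e /\ between ends F e &
      forall e, e \in s -> load ends y e = c e -> ~~ between ends F' e].
Proof.
elim: s F => [|x s IHs] F /=; first by split => // e ->.
set F1 := if _ then _ else F; have [sF1 newF1 tightF1] := IHs F1.
have sFF1 : F \subset F1 by rewrite /F1; case: ifP => _; rewrite ?subsetUr.
split; first exact: subset_trans sF1.
- move=> e he heF; case: (boolP (e \in F1)) => [|heF1]; last first.
    by have [-> /(between_subset sFF1)] := newF1 e he heF1.
  rewrite /F1; case: ifP => [/andP [/eqP ? ?]|_]; last by rewrite (negbTE heF).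
  by rewrite in_setU1 (negbTE heF) orbF => /eqP ->.
- move=> e; rewrite in_cons => /predU1P [->|es] tight; last exact: tightF1.
  have [hb|] := boolP (between ends F x); last first.
    by apply: contra; apply: between_subset (subset_trans sFF1 sF1).
  rewrite /between negbK; apply: refines_refl; rewrite (subsetP sF1) //.
  by rewrite /F1 tight eqxx hb setU11.
Qed.

Lemma merge_spec (F : {set E}) :
  let F' := Defs.merge ends c y F in
  [/\ F \subset F',
      forall e, e \in F' -> e \notin F -> load ends y e = c e /\ between ends F e &
      forall e, load ends y e = c e -> ~~ between ends F' e].
Proof.
have [sF newF tightF] := foldl_merge_spec (enum E) F.
by split => // e; apply: tightF; rewrite mem_enum.
Qed.

End Merge.

Section DualMass.
Variables (R : realFieldType) (V E : finType) (ends : E -> V * V).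
Implicit Types (F : {set E}) (y : {ffun {set V} -> R}) (e : E) (v : V).

Local Notation comp := (Defs.comp ends).

Definition mass y v : R := \sum_(S : {set V} | v \in S) y S.

Definition within_comps y F :=
  forall S, y S != 0 -> {in S &, forall u w, connect (Frel ends F) u w}.

Lemma mass_advance (t : V -> R) F now y d v :
  mass (advance ends t F now y d) v = mass y v + d * (activeb t now (comp F v))%:R.
Proof.
rewrite /mass /advance; under eq_bigr => S _ do rewrite ffunE.
rewrite big_split /=; congr (_ + _).
rewrite (bigD1 (comp F v)) ?in_comp ?connect0 //= mem_comps /=.
rewrite big1 ?addr0 => [|S /andP [hv hS]]; first by case: activeb; rewrite ?mulr1 ?mulr0.
by case: ifP => // /andP [/comps_memE/(_ hv) eS _]; move: hS; rewrite eS eqxx.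
Qed.

Lemma within_comps_advance (t : V -> R) F now y d :
  within_comps y F -> within_comps (advance ends t F now y d) F.
Proof.
move=> hy S; rewrite ffunE; have [-> | /hy //] := eqVneq (y S) 0.
rewrite add0r; case: ifP => [/andP [/imsetP [w _ ->] _] _|]; last by rewrite eqxx.
by move=> u x; rewrite !in_comp => hu hx; apply: connect_trans hx; rewrite connect_FrelC.
Qed.

Lemma within_comps_subset y F F' : F \subset F' -> within_comps y F -> within_comps y F'.
Proof.
by move=> sFF' hy S /hy hS u w hu hw; apply: connect_Frel_subset (hS u w hu hw).
Qed.

(* Sets inside components never contain both ends of an edge between them. *)
Lemma load_mass y F e : within_comps y F -> between ends F e ->
  load ends y e = mass y (ends e).1 + mass y (ends e).2.
Proof.
move=> hy hb; rewrite /load /mass big_mkcond /= [X in _ = X + _]big_mkcond.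
rewrite [X in _ = _ + X]big_mkcond -big_split /=; apply: eq_bigr => S _.
rewrite /crossing; case: (boolP ((ends e).1 \in S)) => hu;
  case: (boolP ((ends e).2 \in S)) => hw /=; rewrite ?addr0 ?add0r //.
have [->|/hy hS] := eqVneq (y S) 0; first by rewrite addr0.
by move: hb; rewrite /between (hS _ _ hu hw).
Qed.

Lemma load_advance (t : V -> R) F now y d e : within_comps y F -> between ends F e ->
  load ends (advance ends t F now y d) e = load ends y e + d * rate ends t F now e.
Proof.
move=> hy hb; have hy' := within_comps_advance (t:=t) (now:=now) (d:=d) hy.
rewrite (load_mass hy' hb) (load_mass hy hb).
by rewrite !mass_advance /rate; ring.
Qed.

End DualMass.

Section Run.
Variables (R : realFieldType) (V E : finType) (ends : E -> V * V) (c : E -> R).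
Hypothesis c_ge0 : forall e, 0 <= c e.
Variables (t : V -> R) (tau : R).
Hypothesis tau_ge0 : 0 <= tau.

Local Notation comp := (Defs.comp ends).
Local Notation state := (state R V E).
Local Notation step := (step ends c t tau).
Implicit Types (s : state) (e : E).

Definition next_event s : R :=
  foldr Order.min (tau + 1) (candidates ends c t (stF s) (stNow s) (stY s)).

Definition duals_at_event s :=
  advance ends t (stF s) (stNow s) (stY s) (next_event s - stNow s).

Definition live s :=
  [/\ stNow s <= tau, within_comps ends (stY s) (stF s),
      forall e, between ends (stF s) e -> load ends (stY s) e < c e & stDone s = false].

Lemma rate_ge0 F now e : 0 <= rate ends t F now e.
Proof. by rewrite /rate addr_ge0 ?ler0n. Qed.

Lemma next_event_gt s : live s -> stNow s < next_event s.
Proof.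
case=> hn _ hb _.
have := foldr_min_mem (tau + 1) (candidates ends c t (stF s) (stNow s) (stY s)).
rewrite -/(next_event s) inE mem_cat => /or3P [/eqP ->|/mapP [w]|/mapP [e]].
- by apply: le_lt_trans hn _; rewrite ltrDl ltr01.
- by rewrite mem_filter => /andP [? _] ->.
- rewrite mem_filter => /andP [/andP [hbe hr] _] ->.
  by rewrite ltrDl divr_gt0 ?subr_gt0 ?hb // lt_def hr rate_ge0.
Qed.

Lemma next_event_le_t s w : stNow s < t w -> next_event s <= t w.
Proof.
move=> hw; apply: foldr_min_le; rewrite inE mem_cat; apply/or3P/Or32.
by apply/mapP; exists w; rewrite // mem_filter hw mem_enum.
Qed.

Lemma next_event_le_edge s e :
  between ends (stF s) e -> rate ends t (stF s) (stNow s) e != 0 ->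
  next_event s <= stNow s + (c e - load ends (stY s) e) / rate ends t (stF s) (stNow s) e.
Proof.
move=> hbe hr; apply: foldr_min_le; rewrite inE mem_cat; apply/or3P/Or33.
by apply/mapP; exists e; rewrite // mem_filter hbe hr mem_enum.
Qed.

Lemma load_lt_before_event s e T : live s -> between ends (stF s) e ->
  T < next_event s ->
  load ends (stY s) e + (T - stNow s) * rate ends t (stF s) (stNow s) e < c e.
Proof.
case=> _ _ hb _ hbe hTn; have [->|hr] := eqVneq (rate ends t (stF s) (stNow s) e) 0.
  by rewrite mulr0 addr0 hb.
have hrp : 0 < rate ends t (stF s) (stNow s) e by rewrite lt_def hr rate_ge0.
have := lt_le_trans hTn (next_event_le_edge hbe hr).
by rewrite -ltrBlDl ltr_pdivlMr // => h; rewrite -ltrBrDl.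
Qed.

Lemma load_le_at_event s e : live s -> between ends (stF s) e ->
  load ends (stY s) e + (next_event s - stNow s) * rate ends t (stF s) (stNow s) e <= c e.
Proof.
case=> _ _ hb _ hbe; have [->|hr] := eqVneq (rate ends t (stF s) (stNow s) e) 0.
  by rewrite mulr0 addr0 ltW ?hb.
have hrp : 0 < rate ends t (stF s) (stNow s) e by rewrite lt_def hr rate_ge0.
have := next_event_le_edge hbe hr.
by rewrite -lerBlDl ler_pdivlMr // => h; rewrite -lerBrDl.
Qed.

Lemma step_event s : live s -> next_event s <= tau ->
  step s = St (Defs.merge ends c (duals_at_event s) (stF s)) (duals_at_event s)
              (next_event s) false.
Proof. by case: s => F y now d [_ _ _ /= ->] hnt; rewrite /= ltNge hnt. Qed.

Lemma step_final s : live s -> tau < next_event s ->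
  stDone (step s) /\ stF (step s) = stF s.
Proof. by case: s => F y now d [_ _ _ /= ->] htn; rewrite /= htn. Qed.

Lemma step_done s : stDone s -> step s = s.
Proof. by case: s => F y now d /= ->. Qed.

Lemma live_step s : live s -> next_event s <= tau -> live (step s).
Proof.
move=> hs hnt; rewrite step_event //; case: (hs) => _ hy _ _.
have [sF _ tightF] := merge_spec ends c (duals_at_event s) (stF s).
have hy' := within_comps_advance (t:=t) (now:=stNow s) (d:=next_event s - stNow s) hy.
split => //=; first exact: within_comps_subset sF hy'.
move=> e hbe; have hbF := between_subset sF hbe.
rewrite lt_def; apply/andP; split.
  by apply/eqP => tight; move: (tightF e (esym tight)); rewrite hbe.
by rewrite /duals_at_event load_advance // load_le_at_event.
Qed.

(* Each event merges two components or passes some t_w. *)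
Definition measure s := (#|comps ends (stF s)| + #|[set w | (stNow s < t w)%R]|)%N.

Lemma measure_step s : live s -> next_event s <= tau -> (measure (step s) < measure s)%N.
Proof.
move=> hs hnt; rewrite step_event // /measure /=; have hgt := next_event_gt hs.
case: (hs) => _ hy _ _; set n := next_event s in hnt hgt *.
have [sF _ tightF] := merge_spec ends c (duals_at_event s) (stF s).
have sT : [set w | n < t w] \subset [set w | stNow s < t w].
  by apply/subsetP => w; rewrite !inE; apply: lt_trans.
have := foldr_min_mem (tau + 1) (candidates ends c t (stF s) (stNow s) (stY s)).
rewrite -/(next_event s) -/n inE mem_cat => /or3P [/eqP hn1|/mapP [w]|/mapP [e]].
- by move: hnt; rewrite hn1 gerDl ler10.
- rewrite mem_filter => /andP [hw _] hnw.
  rewrite -addnS leq_add ?leq_card_comps // proper_card // properE sT.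
  by apply/subsetPn; exists w; rewrite !inE // hnw ltxx.
- rewrite mem_filter => /andP [/andP [hbe hr] _] hne.
  have tight : load ends (duals_at_event s) e = c e.
    by rewrite load_advance // -/n hne [stNow s + _]addrC addrK divfK // addrC subrK.
  by rewrite -addSn leq_add ?(ltn_card_comps sF hbe (tightF e tight)) ?subset_leq_card.
Qed.

Definition stage k := iter k step (init_state ends c).

Local Notation N := (2 * #|V|).+1.

Lemma stageS k : stage k.+1 = step (stage k).
Proof. exact: iterS. Qed.

Lemma live_init : live (stage 0).
Proof.
pose y0 : {ffun {set V} -> R} := [ffun _ => 0].
have [_ _ tightF] := merge_spec ends c y0 set0.
have load0 e : load ends y0 e = 0 by rewrite /load big1 // => S _; rewrite ffunE.
split => //= [S|e hb]; first by rewrite ffunE eqxx.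
rewrite load0 lt_def c_ge0 andbT; apply/eqP => c0.
by move: (tightF e (etrans (load0 e) (esym c0))); rewrite hb.
Qed.

Lemma stage_inv k :
  stDone (stage k) \/ live (stage k) /\ (measure (stage k) + k <= 2 * #|V|)%N.
Proof.
elim: k => [|k [hd|[hs hm]]]; rewrite ?stageS.
- right; split; first exact: live_init.
  by rewrite addn0 mul2n -addnn leq_add ?max_card ?leq_imset_card.
- by left; rewrite step_done.
- case: (leP (next_event (stage k)) tau) => [hnt|htn]; last first.
    by left; case: (step_final hs htn).
  right; split; first exact: live_step.
  by rewrite addnS; apply: leq_trans hm; rewrite ltn_add2r measure_step.
Qed.

Lemma stage_done : stDone (stage N).
Proof. by case: (stage_inv N) => // -[_]; rewrite addnS ltnNge leq_addl. Qed.

Lemma stage_absorb k n : stDone (stage k) -> (k <= n)%N -> stage n = stage k.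
Proof.
move=> hd /subnKC <-; elim: (n - k)%N => [|m IHm]; first by rewrite addn0.
by rewrite addnS stageS IHm step_done.
Qed.

Lemma live_stage_lt k : live (stage k) -> (k < N)%N.
Proof.
move=> hs; rewrite ltnNge; apply/negP => /(stage_absorb stage_done) ek.
by case: hs => _ _ _; rewrite ek stage_done.
Qed.

Lemma run_at_final k : live (stage k) -> tau < next_event (stage k) ->
  stF (run_at ends c t tau) = stF (stage k).
Proof.
move=> hs htn; have [hd hF] := step_final hs htn; rewrite -stageS in hd hF.
by rewrite -[run_at _ _ _ _]/(stage N) (stage_absorb hd (live_stage_lt hs)).
Qed.

Definition mass_at s T v :=
  mass (stY s) v + (T - stNow s) * (activeb t (stNow s) (comp (stF s) v))%:R.

Lemma mass_at_shift s T M v : mass_at s M v =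
  mass_at s T v + (M - T) * (activeb t (stNow s) (comp (stF s) v))%:R.
Proof. by rewrite /mass_at; ring. Qed.

Lemma mass_at_lt_between s e T : live s -> between ends (stF s) e ->
  T < next_event s -> mass_at s T (ends e).1 + mass_at s T (ends e).2 < c e.
Proof.
move=> hs hbe hTn; case: (hs) => _ hy _ _.
have -> : mass_at s T (ends e).1 + mass_at s T (ends e).2 =
    load ends (stY s) e + (T - stNow s) * rate ends t (stF s) (stNow s) e.
  by rewrite (load_mass hy hbe) /mass_at /rate; ring.
exact: load_lt_before_event.
Qed.

Definition catch_up s M := if next_event s <= M then step s else s.

Lemma stage_catch_up k M :
  catch_up (stage k) M = stage (if next_event (stage k) <= M then k.+1 else k).
Proof. by rewrite /catch_up; case: ifP; rewrite ?stageS. Qed.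

Lemma catch_up_spec s M : live s -> stNow s <= M -> M <= tau -> M <= next_event s ->
  let s' := catch_up s M in
  [/\ live s', stNow s' <= M, M < next_event s', stF s \subset stF s' &
      forall v, mass_at s' M v = mass_at s M v].
Proof.
move=> hs hnM hMt hMn; rewrite /catch_up; case: ifP => [hnM'|/negbT]; last first.
  by rewrite -ltNge.
have eM : next_event s = M by apply/eqP; rewrite eq_le hMn hnM'.
have hnt : next_event s <= tau by rewrite eM.
have := live_step hs hnt; rewrite step_event // => hs'.
have [sF _ _] := merge_spec ends c (duals_at_event s) (stF s).
split => //=; first by rewrite -[X in X < _]eM; apply: next_event_gt hs'.
by move=> v; rewrite /mass_at /= mass_advance eM subrr mul0r addr0.
Qed.

Lemma catch_up_new_edge s M e : live s -> M <= tau -> M <= next_event s ->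
  e \in stF (catch_up s M) -> e \notin stF s ->
  mass_at s M (ends e).1 + mass_at s M (ends e).2 = c e.
Proof.
move=> hs hMt hMn; rewrite /catch_up; case: ifP => [hnM|_ ->] //.
have eM : next_event s = M by apply/eqP; rewrite eq_le hMn hnM.
rewrite step_event ?eM //= => he hne; case: (hs) => _ hy _ _.
have [_ newF _] := merge_spec ends c (duals_at_event s) (stF s).
have [<- hbe] := newF e he hne.
have hy' := within_comps_advance (t:=t) (now:=stNow s) (d:=next_event s - stNow s) hy.
by rewrite (load_mass hy' hbe) !mass_advance /mass_at eM.
Qed.

End Run.

Section Coupling.
Variables (R : realFieldType) (V E : finType) (ends : E -> V * V) (c : E -> R).
Hypothesis c_ge0 : forall e, 0 <= c e.
Variables (t t' : V -> R) (tau : R).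
Hypothesis t_le : forall v, t v <= t' v.
Hypothesis tau_ge0 : 0 <= tau.

Local Notation state := (state R V E).
Local Notation live := (live ends c tau).
Local Notation next1 := (next_event ends c t tau).
Local Notation next2 := (next_event ends c t' tau).
Local Notation mass1 := (mass_at ends t).
Local Notation mass2 := (mass_at ends t').
Local Notation stage1 := (stage ends c t tau).
Local Notation stage2 := (stage ends c t' tau).

Definition coupled (s1 s2 : state) T :=
  [/\ live s1, live s2, stNow s1 <= T, stNow s2 <= T &
      [/\ T < next1 s1, T < next2 s2, refines ends (stF s1) (stF s2) &
          forall v, mass1 s1 T v <= mass2 s2 T v]].

Lemma coupled_init : coupled (stage1 0) (stage2 0) 0.
Proof.
have l1 := live_init ends c_ge0 t tau_ge0; have l2 := live_init ends c_ge0 t' tau_ge0.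
split => //; split; [exact: next_event_gt l1 | exact: next_event_gt l2 |
  exact: refines_refl | by move=> v; rewrite /mass_at subrr !mul0r].
Qed.

(* Activity passes from the t-run to the t'-run: the t'-component of v contains
   the t-component, and t <= t'. *)
Lemma coupled_mass_le s1 s2 T M : coupled s1 s2 T -> T <= M ->
  forall v, mass1 s1 M v <= mass2 s2 M v.
Proof.
move=> [_ _ _ n2 [b1 _ hr hA]] hTM v.
rewrite (mass_at_shift _ _ s1 T) (mass_at_shift _ _ s2 T) lerD ?hA //.
rewrite ler_wpM2l ?subr_ge0 //; case h1: activeb; last by rewrite ler_nat.
move: h1 => /existsP [w /andP [hw hnw]].
suff -> : activeb t' (stNow s2) (Defs.comp ends (stF s2) v) by [].
apply/existsP; exists w; rewrite (subsetP (comp_refines v hr)) //=.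
apply: le_lt_trans n2 (lt_le_trans (lt_le_trans b1 _) (t_le w)).
exact: next_event_le_t.
Qed.

Lemma coupled_catch_up s1 s2 T :
  coupled s1 s2 T -> let M := Order.min (next1 s1) (next2 s2) in M <= tau ->
  coupled (catch_up ends c t tau s1 M) (catch_up ends c t' tau s2 M) M.
Proof.
move=> hc M hMt; have [l1 l2 n1 n2 [b1 b2 hr _]] := hc.
have hM1 : M <= next1 s1 by rewrite ge_min lexx.
have hM2 : M <= next2 s2 by rewrite ge_min lexx orbT.
have hTM : T < M by rewrite lt_min b1 b2.
have [l1' n1' b1' sF1 e1] := catch_up_spec l1 (le_trans n1 (ltW hTM)) hMt hM1.
have [l2' n2' b2' sF2 e2] := catch_up_spec l2 (le_trans n2 (ltW hTM)) hMt hM2.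
have hle := coupled_mass_le hc (ltW hTM).
split => //; split => // [e he|v]; last by rewrite e1 e2.
have [hold|hnew] := boolP (e \in stF s1); first exact: refines_subset hr sF2 e hold.
have tight := catch_up_new_edge l1 hMt hM1 he hnew.
apply/negPn/negP => hb2; have := mass_at_lt_between l2' hb2 b2'.
(* a tight t-edge between two t'-components would contradict mass1 <= mass2 *)
by rewrite !e2 -tight ltNge lerD ?hle.
Qed.

Local Notation N := (2 * #|V|).+1.

Lemma refines_run_at_coupled m i j T : (N + N - (i + j) <= m)%N ->
  coupled (stage1 i) (stage2 j) T ->
  refines ends (stF (run_at ends c t tau)) (stF (run_at ends c t' tau)).
Proof.
elim: m i j T => [|m IHm] i j T hm hc; have [l1 l2 _ _ [_ _ hr _]] := hc;
  have hi := live_stage_lt c_ge0 tau_ge0 l1; have hj := live_stage_lt c_ge0 tau_ge0 l2.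
  by exfalso; lia.
set M := Order.min (next1 (stage1 i)) (next2 (stage2 j)).
have [htM|hMt] := ltP tau M.
  rewrite (run_at_final c_ge0 tau_ge0 l1 (lt_le_trans htM _)) ?ge_min ?lexx //.
  by rewrite (run_at_final c_ge0 tau_ge0 l2 (lt_le_trans htM _)) ?ge_min ?lexx ?orbT.
have := coupled_catch_up hc hMt; rewrite -/M !stage_catch_up; apply: IHm.
have : (next1 (stage1 i) <= M) || (next2 (stage2 j) <= M) by rewrite -ge_min.
by move: hm; do 2 case: (_ <= M) => //; lia.
Qed.

Lemma refines_run_at :
  refines ends (stF (run_at ends c t tau)) (stF (run_at ends c t' tau)).
Proof. exact: refines_run_at_coupled (leqnn _) coupled_init. Qed.

End Coupling.

Theorem mainTheorem4 (R : realFieldType) (V E : finType) (ends : E -> V * V)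
  (c : E -> R) (hc : forall e, 0 <= c e)
  (t t' : V -> R) (ht : forall v, 0 <= t v) (ht' : forall v, 0 <= t' v)
  (hle : forall v, t v <= t' v) (tau : R) (htau : 0 <= tau) :
  (forall C, C \in active_components_at ends c t tau ->
     exists2 C', C' \in active_components_at ends c t' tau & C \subset C') /\
  (forall C, C \in components_at ends c t tau ->
     exists2 C', C' \in components_at ends c t' tau & C \subset C').
Proof.
have hr := refines_run_at (ends := ends) hc hle htau.
have sub v := comp_refines v hr.
split => C.
  rewrite inE => /andP [/imsetP [v _ ->] /existsP [w /andP [hw htw]]].
  exists (Defs.comp ends (stF (run_at ends c t' tau)) v) => //.
  rewrite inE mem_comps; apply/existsP; exists w.
  by rewrite (subsetP (sub v)) //= (lt_le_trans htw).
case/imsetP => v _ ->.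
by exists (Defs.comp ends (stF (run_at ends c t' tau)) v); rewrite ?mem_comps.
Qed.
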